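(* Let $G$ be a finite non-abelian group. If there is a prime $p$ such that $G/Z(G)\cong C_p\times C_p$, then $G$ is induced regular.
   Context: For a finite group $G$, $C_G(x)$ denotes the centralizer of $x\in G$ and $Z(G)$ the center. The non-centralizer graph $\Upsilon_G$ is the simple graph with vertex set $G$ in which two distinct vertices $x,y$ are adjacent iff $C_G(x)\neq C_G(y)$; the induced non-centralizer graph $\Upsilon_{G\setminus Z(G)}$ is its induced subgraph on $G\setminus Z(G)$. $G$ is called induced regular if $\Upsilon_{G\setminus Z(G)}$ is a regular graph (all vertices have the same degree). *)

From mathcomp Require Import all_boot all_fingroup all_algebra all_solvable.
Set Implicit Arguments. Unset Strict Implicit. Unset Printing Implicit Defensive.
Local Open Scope group_scope.

Definition nc_adj (gT : finGroupType) (G : {group gT}) (x y : gT) : bool :=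
  (x != y) && ('C_G[x] != 'C_G[y]).

Definition induced_nc_degree (gT : finGroupType) (G : {group gT}) (x : gT) : nat :=
  #|[set y in G :\: 'Z(G) | nc_adj G x y]|.

Definition induced_regular (gT : finGroupType) (G : {group gT}) : Prop :=
  forall x y, x \in G :\: 'Z(G) -> y \in G :\: 'Z(G) ->
    induced_nc_degree G x = induced_nc_degree G y.

From mathcomp Require Import all_boot all_fingroup all_algebra all_solvable.
Set Implicit Arguments. Unset Strict Implicit. Unset Printing Implicit Defensive.
Local Open Scope group_scope.

(* Let Z = Z(G), of index p^2 in G. For x outside Z the centralizer C_G[x]
   lies strictly between Z and G, so it has index p over Z. If moreover
   y is outside Z and commutes with x, then C_G[x] :&: C_G[y] still lies
   strictly above Z (it contains x), hence equals both centralizers. So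
   the non-central neighbours of x are exactly the elements of
   G :\: C_G[x], and every non-central vertex has degree |G| - p |Z|. *)

Lemma prime_square_factor p a b :
  prime p -> (a * b = p ^ 2)%N -> 1 < a -> 1 < b -> a = p.
Proof.
move=> p_pr ab_p2 a_gt1 b_gt1.
have : a %| p ^ 2 by rewrite -ab_p2 dvdn_mulr.
case/(dvdn_pfactor _ _ p_pr) => -[|[|[|m]]] // _ a_eq; first by rewrite a_eq in a_gt1.
move: ab_p2; rewrite a_eq -[RHS]muln1 => /eqP.
by rewrite eqn_pmul2l ?expn_gt0 ?prime_gt0 // => /eqP b1; rewrite b1 in b_gt1.
Qed.

Lemma indexg_isog_Zp_prod (gT : finGroupType) (G H : {group gT}) p :
  G \subset 'N(H) -> 1 < p -> G / H \isog [set: 'Z_p * 'Z_p] ->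
  #|G : H| = (p ^ 2)%N.
Proof.
move=> nHG p_gt1 isoGH.
by rewrite -card_quotient // (card_isog isoGH) cardsT card_prod card_ord Zp_cast.
Qed.

Section IndexPrimeSquare.

Variables (gT : finGroupType) (G Z : {group gT}) (p : nat).
Hypotheses (p_pr : prime p) (iGZ : #|G : Z| = (p ^ 2)%N).

Lemma indexg_mid_prime (H : {group gT}) :
  Z \proper H -> H \proper G -> #|H : Z| = p.
Proof.
move=> /andP[sZH not_sHZ] /andP[sHG not_sGH].
apply: (@prime_square_factor p _ #|G : H| p_pr).
- by rewrite mulnC Lagrange_index.
all: by rewrite indexg_gt1.
Qed.

Lemma mid_subgroup_eq (H K : {group gT}) :
  Z \proper H -> H \subset K -> K \proper G -> H :=: K.
Proof.
move=> pZH sHK pKG; have pZK := proper_sub_trans pZH sHK.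
apply/eqP; rewrite eqEcard sHK.
rewrite -(Lagrange (proper_sub pZH)) -(Lagrange (proper_sub pZK)).
rewrite (indexg_mid_prime pZK pKG).
by rewrite (indexg_mid_prime pZH (sub_proper_trans sHK pKG)) leqnn.
Qed.

End IndexPrimeSquare.

Section NonCentralCentralizers.

Variables (gT : finGroupType) (G : {group gT}).

Lemma center_proper_subcent1 x : x \in G :\: 'Z(G) -> 'Z(G) \proper 'C_G[x].
Proof.
case/setDP=> Gx notZx; have cZG : G \subset 'C('Z(G)) by rewrite centsC subsetIr.
rewrite properE subsetI center_sub sub_cent1 (subsetP cZG x Gx) /=.
by apply/subsetPn; exists x; rewrite ?subcent1_id.
Qed.

Lemma subcent1_proper x : x \in G :\: 'Z(G) -> 'C_G[x] \proper G.
Proof.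
case/setDP=> Gx notZx; rewrite properE subcent1_sub /=.
apply: contra notZx => sGCx; apply/centerP; split=> // y Gy.
by have /subcent1P[_ cxy] := subsetP sGCx y Gy.
Qed.

Variable p : nat.
Hypotheses (p_pr : prime p) (iGZ : #|G : 'Z(G)| = (p ^ 2)%N).

Lemma subcent1_eq x y :
  x \in G :\: 'Z(G) -> y \in G :\: 'Z(G) -> y \in 'C_G[x] -> 'C_G[x] = 'C_G[y].
Proof.
move=> ncx ncy Cxy; have /setDP[Gx notZx] := ncx.
have pZI : 'Z(G) \proper 'C_G[x] :&: 'C_G[y].
  rewrite properE subsetI (proper_sub (center_proper_subcent1 ncx))
          (proper_sub (center_proper_subcent1 ncy)) /=.
  by apply/subsetPn; exists x; rewrite // inE subcent1_id // subcent1C.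
have eqIx := mid_subgroup_eq p_pr iGZ pZI (subsetIl _ _) (subcent1_proper ncx).
have eqIy := mid_subgroup_eq p_pr iGZ pZI (subsetIr _ _) (subcent1_proper ncy).
exact: etrans (esym eqIx) eqIy.
Qed.

Lemma nc_adj_noncentral x y :
  x \in G :\: 'Z(G) -> y \in G :\: 'Z(G) -> nc_adj G x y = (y \notin 'C_G[x]).
Proof.
move=> ncx ncy; have /setDP[Gy _] := ncy.
rewrite /nc_adj; have [Cxy | notCxy] := boolP (y \in 'C_G[x]).
  by rewrite (subcent1_eq ncx ncy Cxy) eqxx andbF.
by apply/andP; split; apply: contraNneq notCxy => ->; rewrite subcent1_id.
Qed.

Lemma induced_nc_neighbours x :
  x \in G :\: 'Z(G) -> [set y in G :\: 'Z(G) | nc_adj G x y] = G :\: 'C_G[x].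
Proof.
move=> ncx; apply/setP=> y; rewrite inE [RHS]inE.
have [ncy | not_ncy] := boolP (y \in G :\: 'Z(G)).
  by rewrite nc_adj_noncentral //; case/setDP: ncy => ->; rewrite andbT.
apply/esym/negbTE; apply: contra not_ncy => /andP[notCxy Gy].
rewrite inE Gy andbT; apply: contra notCxy => Zy.
exact: subsetP (proper_sub (center_proper_subcent1 ncx)) y Zy.
Qed.

Lemma induced_nc_degree_noncentral x :
  x \in G :\: 'Z(G) -> induced_nc_degree G x = (#|G| - #|'Z(G)| * p)%N.
Proof.
move=> ncx; have pZCx := center_proper_subcent1 ncx.
rewrite /induced_nc_degree induced_nc_neighbours // cardsD.
rewrite (setIidPr (subcent1_sub x G)) -(Lagrange (proper_sub pZCx)).
by rewrite (indexg_mid_prime p_pr iGZ pZCx (subcent1_proper ncx)).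
Qed.

End NonCentralCentralizers.

Theorem proposition3p8 (gT : finGroupType) (G : {group gT}) :
  ~~ abelian G ->
  (exists p : nat, prime p /\ (G / 'Z(G))%g \isog [set: 'Z_p * 'Z_p]%g) ->
  induced_regular G.
Proof.
(* Non-commutativity is implied by the second hypothesis. *)
move=> _ [p [p_pr isoGZ]] x y ncx ncy.
have iGZ := indexg_isog_Zp_prod (normal_norm (center_normal G)) (prime_gt1 p_pr) isoGZ.
by rewrite !(induced_nc_degree_noncentral p_pr iGZ).
Qed.
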